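(* Let $\mu\in P(\mathbb{R})$ be a measure that is not a Dirac measure, and write $N_\mu=(\mathbb{R}\setminus\operatorname{conv}(C_\mu))\cup\bigcup_{j} I_j$, where the $I_j$ are the bounded connected components of $N_\mu$ (a disjoint union; the union of the unbounded components of $N_\mu$ equals $\mathbb{R}\setminus\operatorname{conv}(C_\mu)$). Then $$\{\mu\}^1\setminus\Delta=\{\nu\in P(\mathbb{R})\setminus\Delta : \nu(\mathbb{R}\setminus\operatorname{conv}(C_\mu))=1\}\ \cup\ \bigcup_{j}\{\nu\in P(\mathbb{R})\setminus\Delta : \nu(I_j)=1\}.$$
   Context: $P(\mathbb{R})$ is the set of Borel probability measures on $\mathbb{R}$ with the Kuiper distance $d_{Ku}(\mu,\nu)=\sup\{|\mu(I)-\nu(I)| : I\text{ a non-degenerate interval}\}$. $\Delta$ is the set of Dirac measures $\delta_x$ ($x\in\mathbb{R}$). $\{\mu\}^1=\{\nu\in P(\mathbb{R}) : d_{Ku}(\mu,\nu)=1\}$. $N_\mu$ is the union of all non-degenerate intervals $I$ with $\mu(I)=0$, and $C_\mu=\mathbb{R}\setminus N_\mu$ (the co-interval support). $\operatorname{conv}$ denotes convex hull. *)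

From HB Require Import structures.
From mathcomp Require Import all_boot all_order all_algebra.
From mathcomp Require Import all_classical all_reals all_analysis.
Set Implicit Arguments. Unset Strict Implicit. Unset Printing Implicit Defensive.
Import Order.TTheory GRing.Theory Num.Theory.
Import numFieldNormedType.Exports.
Local Open Scope classical_set_scope.
Local Open Scope ring_scope.

Section Defs.
Variable R : realType.

Definition nd_interval (I : set R) : Prop :=
  (forall x y z, I x -> I z -> x <= y -> y <= z -> I y) /\
  exists x y, I x /\ I y /\ x < y.

Definition d_Ku (mu nu : probability R R) : \bar R :=
  ereal_sup [set `|(mu I - nu I)%E|%E | I in nd_interval].

Definition is_dirac (nu : probability R R) : Prop :=
  exists x : R, forall A : set R, measurable A -> nu A = (\1_A x)%:E.

Definition N_of (mu : probability R R) : set R :=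
  \bigcup_(I in [set I | nd_interval I /\ mu I = 0%E]) I.

Definition C_of (mu : probability R R) : set R := ~` N_of mu.

Definition conv_hull (A : set R) : set R :=
  [set y | exists x z, A x /\ A z /\ x <= y /\ y <= z].

Definition bounded_component (N I : set R) : Prop :=
  exists x, N x /\ I = connected_component N x /\
    exists a b : R, I `<=` `[a, b].
End Defs.

From HB Require Import structures.
From mathcomp Require Import all_boot all_order all_algebra.
From mathcomp Require Import all_classical all_reals all_analysis.
From mathcomp Require Import measurable_realfun lra.
Import Order.TTheory GRing.Theory Num.Theory.
Import numFieldNormedType.Exports.

(* If d_Ku(mu, nu) = 1, there are intervals I with mu(I) -> 0 and nu(I) -> 1,
   or the same with mu and nu exchanged. Let H_nu be the interval of points
   having positive nu-mass on both sides; then nu(H_nu) = 1, and any I with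
   nu(I) close enough to 1 contains a given closed subinterval of H_nu, so in
   the first case mu(H_nu) = 0: H_nu is a nondegenerate mu-null interval
   carrying nu, hence lies in a component of N_mu, bounded or not. In the
   second case nu(H_mu) = 0 and conv(C_mu) is contained in H_mu.
   Conversely, N_mu is mu-null, being covered by countably many mu-null
   intervals (for each rational q, the union of the null intervals through q),
   so conv(C_mu) and the bounded components of N_mu are intervals on which
   (mu, nu) takes the values (1, 0) or (0, 1). *)

Set Implicit Arguments.
Unset Strict Implicit.
Unset Printing Implicit Defensive.
Local Open Scope classical_set_scope.
Local Open Scope ring_scope.

Lemma negligible_bigcup_countable d (T : sigmaRingType d) (R : realFieldType)
    (mu : {measure set T -> \bar R}) (I : countType) (F : I -> set T) :
  (forall i, mu.-negligible (F i)) -> mu.-negligible (\bigcup_i F i).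
Proof.
move=> F0; pose G n := if unpickle n is Some i then F i else set0.
apply: (negligibleS _ (negligible_bigcup (F := G) _)).
  by move=> x [i _ Fix]; exists (pickle i) => //; rewrite /G pickleK.
move=> n; rewrite /G; case: unpickle => [i|]; first exact: F0.
exact: negligible_set0.
Qed.

Section intervals.
Variable R : realType.
Implicit Types (I J K A : set R) (m : {measure set R -> \bar R}).

Lemma nd_intervalP I :
  nd_interval I <-> is_interval I /\ exists x y, I x /\ I y /\ x < y.
Proof.
split=> [[iI nI]|[iI nI]]; split=> //.
  by move=> x y Ix Iy z /andP[xz zy]; exact: iI Ix Iy xz zy.
by move=> x y z Ix Iz xy yz; apply: (iI x z) => //; rewrite xy yz.
Qed.

Lemma nd_interval_is_interval I : nd_interval I -> is_interval I.
Proof. by case/nd_intervalP. Qed.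

Lemma is_interval_setU I J c :
  is_interval I -> is_interval J -> I c -> J c -> is_interval (I `|` J).
Proof.
move=> iI iJ Ic Jc x y Ix Iy z /andP[xz zy]; have [zc|cz] := leP z c.
  by case: Ix => [Ix|Jx]; [left; apply: (iI x c)|right; apply: (iJ x c)];
    rewrite ?xz ?zc.
by case: Iy => [Iy|Jy]; [left; apply: (iI c y)|right; apply: (iJ c y)];
  rewrite ?zy ?(ltW cz).
Qed.

Lemma is_interval_conv_hull A : is_interval (conv_hull A).
Proof.
move=> x y [a [_ [Aa [_ [ax _]]]]] [_ [b [_ [Ab [_ yb]]]]] z /andP[xz zy].
by exists a, b; do 2 split=> //; split; [exact: le_trans xz|exact: le_trans yb].
Qed.

Lemma measurable_conv_hull A : measurable (conv_hull A).
Proof. by apply: is_interval_measurable; exact: is_interval_conv_hull. Qed.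

Lemma is_interval_connected_component A x :
  is_interval (connected_component A x).
Proof. exact/connected_intervalP/component_connected. Qed.

Lemma unbounded_interval_sub_conv_hullC A K :
  is_interval K -> K `<=` ~` A -> ~ (exists a b, K `<=` `[a, b]) ->
  K `<=` ~` conv_hull A.
Proof.
move=> iK KA Kunb y Ky [a [b [Aa [Ab [ay yb]]]]]; apply: Kunb; exists a, b.
move=> w Kw; rewrite /= in_itv /=; apply/andP; split; rewrite leNgt; apply/negP.
  by move=> wa; apply: (KA a _ Aa); apply: (iK w y) => //; rewrite (ltW wa) ay.
by move=> bw; apply: (KA b _ Ab); apply: (iK y w) => //; rewrite yb (ltW bw).
Qed.

Lemma is_interval_ratr_between J u v : is_interval J -> J u -> J v -> u < v ->
  exists q : rat, J (ratr q) /\ u < ratr q < v.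
Proof.
move=> iJ Ju Jv /rat_in_itvoo[q]; rewrite in_itv /= => /andP[uq qv].
by exists q; split; [apply: (iJ u v); rewrite ?ltW|apply/andP].
Qed.

Lemma negligible_interval m J : is_interval J ->
  (forall u v, J u -> J v -> m.-negligible `[u, v]) -> m.-negligible J.
Proof.
move=> iJ Juv.
(* J lies in its extremal points and the intervals [q, r] with q, r rational
   points of J. *)
have negl_extremal S : S `<=` J -> (forall x y, S x -> S y -> x <= y) ->
    m.-negligible S.
  move=> SJ Sle; have [[x Sx]|S0] := pselect (S !=set0).
    apply: (negligibleS _ (Juv x x (SJ x Sx) (SJ x Sx))) => y Sy.
    by rewrite /= in_itv /= !Sle.
  by apply: (negligibleS _ (negligible_set0 m)) => y Sy; apply: S0; exists y.
pose Jmin := [set x | J x /\ forall y, J y -> x <= y].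
pose Jmax := [set x | J x /\ forall y, J y -> y <= x].
pose cell (qr : rat * rat) : set R :=
  [set x | J (ratr qr.1) /\ J (ratr qr.2) /\ ratr qr.1 <= x <= ratr qr.2].
have cell_negl qr : m.-negligible (cell qr).
  have [[J1 J2]|nJ] := pselect (J (ratr qr.1) /\ J (ratr qr.2)).
    by apply: (negligibleS _ (Juv _ _ J1 J2)) => x [_ [_]]; rewrite /= in_itv.
  by apply: (negligibleS _ (negligible_set0 m)) => x [J1 [J2 _]]; apply: nJ.
have Jmin_negl : m.-negligible Jmin.
  by apply: negl_extremal => [x []//|x y [_ xJ] [Jy _]]; exact: xJ.
have Jmax_negl : m.-negligible Jmax.
  by apply: negl_extremal => [x []//|x y [Jx _] [_ Jy]]; exact: Jy.
apply: (negligibleS _ (negligibleU (negligibleU Jmin_negl Jmax_negl)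
  (negligible_bigcup_countable cell_negl))) => x Jx.
have [[u Ju ux]|xmin] := pselect (exists2 u, J u & u < x); last first.
  left; left; split=> // y Jy; rewrite leNgt; apply/negP => yx.
  by apply: xmin; exists y.
have [[v Jv xv]|xmax] := pselect (exists2 v, J v & x < v); last first.
  left; right; split=> // y Jy; rewrite leNgt; apply/negP => xy.
  by apply: xmax; exists y.
have [q [Jq /andP[_ qx]]] := is_interval_ratr_between iJ Ju Jx ux.
have [r [Jr /andP[xr _]]] := is_interval_ratr_between iJ Jx Jv xv.
by right; exists (q, r) => //; do 2 split=> //; rewrite !ltW.
Qed.

Lemma null_intervals_negligible m :
  m.-negligible (\bigcup_(I in [set I | nd_interval I /\ m I = 0%E]) I).
Proof.
have null_negl I : nd_interval I -> m I = 0%E -> m.-negligible I.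
  move=> /nd_interval_is_interval/is_interval_measurable mI.
  by move/negligibleP; apply.
pose through (q : rat) : set R :=
  \bigcup_(I in [set I | (nd_interval I /\ m I = 0%E) /\ I (ratr q)]) I.
have through_negl q : m.-negligible (through q).
  apply: negligible_interval => [x y [I1 I1q x1] [I2 I2q y2] z xzy|
      u v [I1 [[nd1 I10] q1] u1] [I2 [[nd2 I20] q2] v2]].
    have [[nd1 _] q1] := I1q; have [[nd2 _] q2] := I2q.
    have := is_interval_setU (nd_interval_is_interval nd1)
      (nd_interval_is_interval nd2) q1 q2 (or_introl x1) (or_intror y2) xzy.
    by case=> [I1z|I2z]; [exists I1|exists I2].
  apply: (negligibleS _
    (negligibleU (null_negl _ nd1 I10) (null_negl _ nd2 I20))) => z.
  rewrite /= in_itv /=.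
  exact: (is_interval_setU (nd_interval_is_interval nd1)
    (nd_interval_is_interval nd2) q1 q2 (or_introl u1) (or_intror v2)).
apply: (negligibleS _ (negligible_bigcup_countable through_negl)).
move=> x [I [ndI I0] Ix]; have /nd_intervalP[iI [a [b [Ia [Ib ab]]]]] := ndI.
have [q [Iq _]] := is_interval_ratr_between iI Ia Ib ab.
by exists q => //; exists I.
Qed.

End intervals.

Section probability.
Variables (R : realType) (p : probability R R).
Implicit Types (A B J : set R).

Lemma probability_fin A :
  measurable A -> exists2 a : R, p A = a%:E & 0 <= a <= 1.
Proof.
move=> mA; exists (fine (p A)); first by rewrite fineK ?fin_num_measure.
apply/andP; split; first exact/fine_ge0/measure_ge0.
by rewrite -lee_fin fineK ?fin_num_measure ?probability_le1.
Qed.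

Lemma probability_setC_eq0 A : measurable A -> p (~` A) = 0%E <-> p A = 1%E.
Proof.
move=> mA; have [a pA _] := probability_fin mA.
rewrite probability_setC // pA -EFinB.
by split=> [[/eqP]|[->]]; [rewrite subr_eq0 => /eqP <-|rewrite subrr].
Qed.

Lemma probability_setC_eq1 A : measurable A -> p (~` A) = 1%E <-> p A = 0%E.
Proof.
move=> mA; rewrite -[in X in _ <-> X](setCK A).
by split=> /probability_setC_eq0; apply; exact: measurableC.
Qed.

Lemma probability_subset1 A B :
  measurable A -> measurable B -> A `<=` B -> p A = 1%E -> p B = 1%E.
Proof.
move=> mA mB AB pA; apply/le_anti; rewrite probability_le1 //= -pA.
by rewrite le_measure ?inE.
Qed.

Lemma probability_setI_neq0 A B : measurable A -> measurable B ->
  (1 < p A + p B)%E -> A `&` B !=set0.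
Proof.
move=> mA mB; apply: contraPP => /set0P/negP/negbNE/eqP AB0.
by rewrite -(measureU p mA mB AB0) ltNge probability_le1 //; exact: measurableU.
Qed.

Lemma is_dirac_set1 x : p [set x] = 1%E -> is_dirac p.
Proof.
move=> px; exists x => A mA; rewrite indicE; have [xA|xA] := boolP (x \in A).
  apply: (probability_subset1 (measurable_set1 x) mA _ px) => y ->.
  exact/set_mem.
apply: (subset_measure0 mA (measurableC (measurable_set1 x))).
  by move=> y Ay yx; move: xA; rewrite -yx => /negP; apply; exact/mem_set.
exact/probability_setC_eq0.
Qed.

Lemma nd_interval_prob1 J : is_interval J -> p J = 1%E -> ~ is_dirac p ->
  nd_interval J.
Proof.
move=> iJ pJ ndp; apply/nd_intervalP; split=> //.
have [x Jx] : J !=set0.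
  apply/set0P/negP => /eqP J0; move: pJ; rewrite J0 measure0 => -[]/eqP.
  by rewrite eq_sym oner_eq0.
have [[y Jy yx]|Jx1] := pselect (exists2 y, J y & y != x).
  have [xy|yx'|xy] := ltgtP x y; [by exists x, y|by exists y, x|].
  by rewrite xy eqxx in yx.
exfalso; apply: ndp; apply: (is_dirac_set1 (x := x)); rewrite -pJ; congr (p _).
apply/seteqP; split=> [y ->//|y Jy]; apply: contrapT => yx; apply: Jx1.
by exists y => //; exact/eqP.
Qed.

End probability.

Section mass_hull.
Variable R : realType.
Implicit Types (m : {measure set R -> \bar R}) (mu nu : probability R R).

(* Up to its endpoints, the convex hull of the support of m. *)
Definition mass_hull (m : set R -> \bar R) : set R :=
  [set y | (0 < m `]-oo, y]%classic)%E /\ (0 < m `[y, +oo[%classic)%E].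

Lemma is_interval_mass_hull m : is_interval (mass_hull m).
Proof.
move=> x y [xlo _] [_ yhi] z /andP[xz zy]; split.
  apply: (lt_le_trans xlo); apply: le_measure; rewrite ?inE //=.
  by apply: subset_itvl; rewrite bnd_simp.
apply: (lt_le_trans yhi); apply: le_measure; rewrite ?inE //=.
by apply: subset_itvr; rewrite bnd_simp.
Qed.

Lemma measurable_mass_hull m : measurable (mass_hull m).
Proof. by apply: is_interval_measurable; exact: is_interval_mass_hull. Qed.

Lemma mass_hull_prob1 mu : mu (mass_hull mu) = 1%E.
Proof.
pose D := [set y | mu `]-oo, y]%classic = 0%E].
pose U := [set y | mu `[y, +oo[%classic = 0%E].
have D_negl : mu.-negligible D.
  apply: negligible_interval => [x y _ Dy z /andP[_ zy]|u v _ Dv].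
    apply: (subset_measure0 _ _ _ Dy); try exact: measurable_itv.
    by apply: subset_itvl; rewrite bnd_simp.
  exists `]-oo, v]%classic; split=> //.
  by apply: subset_itvr; rewrite bnd_simp.
have U_negl : mu.-negligible U.
  apply: negligible_interval => [x y Ux _ z /andP[xz _]|u v Uu _].
    apply: (subset_measure0 _ _ _ Ux); try exact: measurable_itv.
    by apply: subset_itvr; rewrite bnd_simp.
  exists `[u, +oo[%classic; split=> //.
  by apply: subset_itvl; rewrite bnd_simp.
apply/probability_setC_eq0; first exact: measurable_mass_hull.
apply: measure_negligible.
  by apply: measurableC; exact: measurable_mass_hull.
apply: (negligibleS _ (negligibleU D_negl U_negl)) => y /not_andP[] y0;
  [left|right]; apply/eqP; rewrite -measure_le0 leNgt; exact/negP.
Qed.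

Lemma conv_hull_C_sub_mass_hull mu : conv_hull (C_of mu) `<=` mass_hull mu.
Proof.
move=> y [x [z [Cx [Cz [xy yz]]]]]; split; rewrite lt0e measure_ge0 andbT;
  apply/eqP => mu0.
  apply: Cx; exists `]-oo, y]%classic; last by rewrite /= in_itv /= xy.
  split=> //; apply/nd_intervalP; split; first exact: interval_is_interval.
  by exists (y - 1), y; rewrite /= !in_itv /=; split; [|split]; lra.
apply: Cz; exists `[y, +oo[%classic; last by rewrite /= in_itv /= yz.
split=> //; apply/nd_intervalP; split; first exact: interval_is_interval.
by exists y, (y + 1); rewrite /= !in_itv /=; split; [|split]; lra.
Qed.

Lemma conv_hull_C_prob1 mu : mu (conv_hull (C_of mu)) = 1%E.
Proof.
apply/probability_setC_eq0; first exact: measurable_conv_hull.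
apply: measure_negligible.
  by apply: measurableC; exact: measurable_conv_hull.
apply: (negligibleS _ (null_intervals_negligible mu)) => x Cx.
by apply: contrapT => Nx; apply: Cx; exists x, x.
Qed.

Lemma N_of_component_null mu x :
  mu (connected_component (N_of mu) x) = 0%E.
Proof.
apply: measure_negligible.
  by apply: is_interval_measurable; exact: is_interval_connected_component.
apply: negligibleS (null_intervals_negligible mu).
exact: connected_component_sub.
Qed.

Definition eps_separated (m1 m2 : set R -> \bar R) (e : R) :=
  exists I, is_interval I /\ (m1 I < e%:E)%E /\ ((1 - e)%:E < m2 I)%E.

Lemma eps_separated_le m1 m2 e e' :
  e <= e' -> eps_separated m1 m2 e -> eps_separated m1 m2 e'.
Proof.
move=> ee' [I [iI [m1I m2I]]]; exists I; split=> //; split.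
  by apply: (lt_le_trans m1I); rewrite lee_fin.
by apply: le_lt_trans m2I; rewrite lee_fin; lra.
Qed.

Lemma mass_hull_null mu nu :
  (forall e, 0 < e -> eps_separated mu nu e) -> mu (mass_hull nu) = 0%E.
Proof.
move=> sep; apply: measure_negligible; first exact: measurable_mass_hull.
apply: negligible_interval; first exact: is_interval_mass_hull.
move=> u v [ulo _] [_ vhi]; apply/negligibleP; first exact: measurable_itv.
pose t := Order.min (nu `]-oo, u]%classic) (nu `[v, +oo[%classic).
have t_fin : t \is a fin_num.
  by rewrite /t; case: ltP => _; rewrite fin_num_measure.
have t_gt0 : 0 < fine t.
  by apply: fine_gt0; rewrite lt_min ulo vhi ltey_eq t_fin.
apply/eqP; rewrite -measure_le0; apply/lee_addgt0Pr => e e0; rewrite add0e.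
pose f := Order.min e (fine t).
have [I [iI [muI nuI]]] : eps_separated mu nu f.
  by apply: sep; rewrite lt_min e0.
have meets A : measurable A -> (t <= nu A)%E -> I `&` A !=set0.
  move=> mA tA; apply: probability_setI_neq0 => //.
    exact: is_interval_measurable.
  have -> : 1%E = ((1 - f)%:E + f%:E)%E by rewrite -EFinD subrK.
  apply: lte_leD nuI (le_trans _ tA) => //.
  by rewrite -[leRHS]fineK // lee_fin ge_min lexx orbT.
have [x [Ix]] : I `&` `]-oo, u]%classic !=set0.
  by apply: meets; [exact: measurable_itv|rewrite ge_min lexx].
have [y [Iy]] : I `&` `[v, +oo[%classic !=set0.
  by apply: meets; [exact: measurable_itv|rewrite ge_min lexx orbT].
rewrite /= !in_itv /= andbT => vy xu.
apply: (@le_trans _ _ (mu I)).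
  apply: le_measure; rewrite ?inE //=; first exact: is_interval_measurable.
  move=> w; rewrite /= in_itv /= => /andP[uw wv].
  by apply: (iI x y) => //; rewrite (le_trans xu uw) (le_trans wv vy).
by apply: (le_trans (ltW muI)); rewrite lee_fin ge_min lexx.
Qed.

End mass_hull.

Lemma forall_gt0_or (R : realDomainType) (P Q : R -> Prop) :
  (forall e e', e <= e' -> P e -> P e') ->
  (forall e e', e <= e' -> Q e -> Q e') ->
  (forall e, 0 < e -> P e \/ Q e) ->
  (forall e, 0 < e -> P e) \/ (forall e, 0 < e -> Q e).
Proof.
move=> Pup Qup PQ; have [|/existsNP[e1 /not_implyP[e10 nPe1]]] :=
  pselect (forall e, 0 < e -> P e); first by left.
right=> e e0; have e1e0 : 0 < Num.min e e1 by rewrite lt_min e0 e10.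
case: (PQ _ e1e0) => [Pm|Qm]; last by apply: Qup Qm; rewrite ge_min lexx.
by exfalso; apply/nPe1/(Pup _ _ _ Pm); rewrite ge_min lexx orbT.
Qed.

Section kuiper.
Variable R : realType.
Implicit Types mu nu : probability R R.

Lemma d_Ku_le1 mu nu : (d_Ku mu nu <= 1)%E.
Proof.
apply: ge_ereal_sup => _ [I ndI <-].
have mI := is_interval_measurable (nd_interval_is_interval ndI).
have [a -> /andP[a0 a1]] := probability_fin mu mI.
have [b -> /andP[b0 b1]] := probability_fin nu mI.
by rewrite -EFinB /= lee_fin ler_norml; apply/andP; split; lra.
Qed.

Lemma d_Ku_eq1 mu nu I :
  nd_interval I -> (`|mu I - nu I| = 1)%E -> d_Ku mu nu = 1%E.
Proof.
move=> ndI muInuI; apply/le_anti; rewrite d_Ku_le1 /=.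
by apply: le_ereal_sup_tmp; exists 1%E => //; exists I.
Qed.

Lemma d_Ku1_eps_separated mu nu : d_Ku mu nu = 1%E ->
  forall e, 0 < e -> eps_separated mu nu e \/ eps_separated nu mu e.
Proof.
move=> d1 e e0; have : ((1 - e)%:E < d_Ku mu nu)%E by rewrite d1 lte_fin; lra.
move=> /ereal_sup_gt[_ [I ndI <-]].
have iI := nd_interval_is_interval ndI; have mI := is_interval_measurable iI.
have [a muI /andP[a0 a1]] := probability_fin mu mI.
have [b nuI /andP[b0 b1]] := probability_fin nu mI.
rewrite muI nuI -EFinB /= lte_fin ltr_normr => /orP[] ab;
  [right|left]; exists I;
  by rewrite muI nuI !lte_fin; split=> //; split; lra.
Qed.

Lemma null_interval_prob1_cases mu nu J :
  nd_interval J -> mu J = 0%E -> nu J = 1%E ->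
  nu (~` conv_hull (C_of mu)) = 1%E \/
  exists I, bounded_component (N_of mu) I /\ nu I = 1%E.
Proof.
move=> ndJ muJ nuJ; have /nd_intervalP[iJ [x [_ [Jx _]]]] := ndJ.
have JN : J `<=` N_of mu by move=> y Jy; exists J.
pose K := connected_component (N_of mu) x.
have JK : J `<=` K.
  by apply: connected_component_max => //; exact/connected_intervalP.
have iK : is_interval K by exact: is_interval_connected_component.
have nuK : nu K = 1%E.
  by apply: (probability_subset1 _ _ JK nuJ); exact: is_interval_measurable.
have [Kb|Kunb] := pselect (exists a b, K `<=` `[a, b]).
  by right; exists K; split=> //; exists x; split; [exact: JN|split].
left; apply: (probability_subset1 _ _ _ nuK).
- exact: is_interval_measurable.
- by apply: measurableC; exact: measurable_conv_hull.
- apply: unbounded_interval_sub_conv_hullC => // y Ky; apply.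
  exact: connected_component_sub Ky.
Qed.

End kuiper.

Theorem lemma3p3 (R : realType) (mu : probability R R) :
  ~ is_dirac mu ->
  forall nu : probability R R,
    (d_Ku mu nu = 1%E /\ ~ is_dirac nu) <->
    (~ is_dirac nu /\
      (nu (~` conv_hull (C_of mu)) = 1%E \/
       exists I, bounded_component (N_of mu) I /\ nu I = 1%E)).
Proof.
move=> ndmu nu; split=> [[d1 ndnu]|[ndnu nu1]]; split=> //.
  have [sep|sep] := forall_gt0_or (@eps_separated_le _ mu nu)
    (@eps_separated_le _ nu mu) (d_Ku1_eps_separated d1).
    apply: null_interval_prob1_cases (mass_hull_null sep) (mass_hull_prob1 nu).
    apply: nd_interval_prob1 (mass_hull_prob1 nu) ndnu.
    exact: is_interval_mass_hull.
  left; apply: (probability_subset1 _ _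
    (subsetC (conv_hull_C_sub_mass_hull (mu := mu)))).
  - by apply: measurableC; exact: measurable_mass_hull.
  - by apply: measurableC; exact: measurable_conv_hull.
  - apply/probability_setC_eq1; first exact: measurable_mass_hull.
    exact: mass_hull_null.
case: nu1 => [nuC|[K [[x [_ [-> _]]] nuK]]].
  have muC := conv_hull_C_prob1 mu.
  have iC : is_interval (conv_hull (C_of mu)) by exact: is_interval_conv_hull.
  apply: (d_Ku_eq1 (nd_interval_prob1 iC muC ndmu)).
  move/probability_setC_eq1: nuC => /(_ (measurable_conv_hull _)) ->.
  by rewrite muC sube0 abse1.
have iK : is_interval (connected_component (N_of mu) x).
  exact: is_interval_connected_component.
apply: (d_Ku_eq1 (nd_interval_prob1 iK nuK ndnu)).
by rewrite N_of_component_null nuK sub0e abseN abse1.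
Qed.
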